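(* Let $v=v_1\cdots v_n$ be a word of distinct positive integers avoiding $31425,32415,31524,32514$, with positions of left-to-right maxima $a_1<\dots<a_h$ and of right-to-left maxima $b_1<\dots<b_g$ ($a_h=b_1$). Assume $g>1$, $a_h>h$, $h>2$ and $v_{a_{h-1}}>v_{b_2}$. Let $x=\max(\{j:1\le j<a_{h-1},\ v_j>v_{j+1}\}\cup\{0\})$. Then one of the following holds: (B-1) $x=0$; (B-2) $x\ne0$ and $a_h=a_{h-1}+1$; moreover, if $v_{b_2}>v_x$ then $v_x<v_j<v_{b_2}$ for all $a_h<j<b_2$; (B-3) $x\ne 0$, $a_h>a_{h-1}+1$, and $v_x<v_j<v_{a_{h-1}}$ for all $a_{h-1}<j<a_h$; moreover, if $v_{b_2}>v_x$ then $v_x<v_j<v_{b_2}$ for all $a_h<j<b_2$.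
   Context: A word of distinct positive integers avoids a pattern $P$ (a permutation of $[m]$) if no subsequence of length $m$ is order-isomorphic to $P$. A left-to-right (resp. right-to-left) maximum of $v$ is a letter $v_i$ greater than all letters to its left (resp. right). *)

From mathcomp Require Import all_boot.
Set Implicit Arguments. Unset Strict Implicit. Unset Printing Implicit Defensive.

(* Words are [seq nat]; positions are 1-indexed as in the paper. *)
Definition letter (v : seq nat) (i : nat) : nat := nth 0 v i.-1.

Definition order_iso (w P : seq nat) : Prop :=
  size w = size P /\
  forall k l, k < size P -> l < size P ->
    (nth 0 w k < nth 0 w l) = (nth 0 P k < nth 0 P l).

Definition avoids (v P : seq nat) : Prop :=
  ~ exists w, subseq w v /\ order_iso w P.

Definition is_ltr_max (v : seq nat) (i : nat) : bool :=
  [&& 0 < i, i <= size v & [forall j : 'I_i, (0 < j) ==> (letter v j < letter v i)]].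

Definition is_rtl_max (v : seq nat) (i : nat) : bool :=
  [&& 0 < i, i <= size v &
      [forall j : 'I_(size v).+1, (i < j) ==> (letter v j < letter v i)]].

Definition ltr_pos (v : seq nat) : seq nat := [seq i <- iota 1 (size v) | is_ltr_max v i].
Definition rtl_pos (v : seq nat) : seq nat := [seq i <- iota 1 (size v) | is_rtl_max v i].

Definition pos (s : seq nat) (k : nat) : nat := nth 0 s k.-1.

Definition xdesc (v : seq nat) (A : nat) : nat :=
  \max_(1 <= j < A | letter v j.+1 < letter v j) j.

From mathcomp Require Import all_boot zify.
Set Implicit Arguments. Unset Strict Implicit. Unset Printing Implicit Defensive.

(* Write A = a_(h-1), M = a_h and B = b_2. The last left-to-right maximum M is the
   strict global maximum, hence also the first right-to-left maximum, so A < M < B;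
   every letter strictly between A and M is below v_A, and every letter strictly
   between M and B is below v_B. If x > 0 then x + 1 < A and v_(x+1) < v_x < v_A < v_M.
   A letter v_j < v_x with A < j < M would make x, x+1, A, j, M an occurrence of
   31425 or 32415; with M < j < B and v_x < v_B, the positions x, x+1, M, j, B would
   form 31524 or 32514. *)

Section SortedNth.
Variable s : seq nat.
Hypothesis s_sorted : sorted ltn s.

Lemma leq_nth_sorted : {in [pred i | i < size s] &, {mono nth 0 s : i j / i <= j}}.
Proof. exact/leq_mono_in/(sorted_ltn_nth ltn_trans). Qed.

Lemma ltn_nth_sorted i j : i < j -> j < size s -> nth 0 s i < nth 0 s j.
Proof.
move=> lt_ij lt_j; apply: (sorted_ltn_nth ltn_trans) => //; rewrite inE //.
exact: ltn_trans lt_j.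
Qed.

Lemma mem_leq_nth m k : m \in s -> k < size s -> (m <= nth 0 s k) = (index m s <= k).
Proof.
by move=> m_in k_lt; rewrite -{1}(nth_index 0 m_in) leq_nth_sorted ?inE ?index_mem.
Qed.

Lemma nth_leq_mem m k : m \in s -> k < size s -> (nth 0 s k <= m) = (k <= index m s).
Proof.
by move=> m_in k_lt; rewrite -{1}(nth_index 0 m_in) leq_nth_sorted ?inE ?index_mem.
Qed.

End SortedNth.

Section Word.
Variable v : seq nat.

Lemma map_letter_iota : map (letter v) (iota 1 (size v)) = v.
Proof.
by rewrite (iotaDl 1 0) -map_comp -[RHS](mkseq_nth 0 v); apply: eq_map.
Qed.

Lemma subseq_letters ps : sorted ltn ps -> all (fun p => 0 < p <= size v) ps ->
  subseq (map (letter v) ps) v.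
Proof.
move=> ps_sorted ps_range; rewrite -[X in subseq _ X]map_letter_iota.
have ps_uniq : uniq ps by move: ps_sorted; rewrite ltn_sorted_uniq_leq => /andP[].
suff -> : ps = filter (mem ps) (iota 1 (size v)) by apply/map_subseq/filter_subseq.
apply: (irr_sorted_eq ltn_trans ltnn) => //.
  exact: (sorted_filter ltn_trans _ (iota_ltn_sorted 1 (size v))).
move=> p; rewrite mem_filter mem_iota /=.
by case: (boolP (p \in ps)) => //= /(allP ps_range); lia.
Qed.

Lemma avoids_positions P ps : avoids v P -> sorted ltn ps ->
  all (fun p => 0 < p <= size v) ps -> ~ order_iso (map (letter v) ps) P.
Proof.
move=> av_P ps_sorted ps_range iso; apply: av_P.
by exists (map (letter v) ps); split; first exact: subseq_letters.
Qed.

End Word.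

Lemma order_iso_relabel (cs P : seq nat) : sorted ltn cs ->
  all (fun p => 0 < p <= size cs) P -> order_iso [seq nth 0 cs p.-1 | p <- P] P.
Proof.
move=> cs_sorted P_range; split; first by rewrite size_map.
move=> k l k_lt l_lt; rewrite !(nth_map 0) //.
move: (allP P_range _ (mem_nth 0 k_lt)) (allP P_range _ (mem_nth 0 l_lt)).
move: (nth 0 P k) (nth 0 P l) => p q /andP[p_gt0 p_le] /andP[q_gt0 q_le].
by rewrite -!subn1 (leqW_mono_in (leq_nth_sorted cs_sorted)) ?inE;
  [apply/idP/idP | |]; lia.
Qed.

Section Maxima.
Variable v : seq nat.
Local Notation a := (ltr_pos v).
Local Notation b := (rtl_pos v).

Lemma is_ltr_maxP i : reflect (0 < i <= size v /\
    forall j, 0 < j < i -> letter v j < letter v i) (is_ltr_max v i).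
Proof.
apply: (iffP and3P) => [[i_gt0 i_le /forallP lt_i] | [/andP[i_gt0 i_le] lt_i]].
  split=> [|j /andP[j_gt0 lt_ji]]; first by rewrite i_gt0.
  by have := lt_i (Ordinal lt_ji); rewrite /= j_gt0.
split=> //; apply/forallP => j; apply/implyP => j_gt0.
by apply: lt_i; rewrite j_gt0 ltn_ord.
Qed.

Lemma is_rtl_maxP i : reflect (0 < i <= size v /\
    forall j, i < j <= size v -> letter v j < letter v i) (is_rtl_max v i).
Proof.
apply: (iffP and3P) => [[i_gt0 i_le /forallP lt_i] | [/andP[i_gt0 i_le] lt_i]].
  split=> [|j /andP[lt_ij j_le]]; first by rewrite i_gt0.
  by have := lt_i (Ordinal (j_le : j < (size v).+1)); rewrite /= lt_ij.
split=> //; apply/forallP => j; apply/implyP => lt_ij.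
by apply: lt_i; rewrite lt_ij -ltnS ltn_ord.
Qed.

Lemma mem_ltr_pos i : (i \in a) = is_ltr_max v i.
Proof.
rewrite mem_filter mem_iota andb_idr // => /is_ltr_maxP[i_range _]; lia.
Qed.

Lemma mem_rtl_pos i : (i \in b) = is_rtl_max v i.
Proof.
rewrite mem_filter mem_iota andb_idr // => /is_rtl_maxP[i_range _]; lia.
Qed.

Lemma is_ltr_max_nth k : k < size a -> is_ltr_max v (nth 0 a k).
Proof. by move=> k_lt; rewrite -mem_ltr_pos mem_nth. Qed.

Lemma is_rtl_max_nth k : k < size b -> is_rtl_max v (nth 0 b k).
Proof. by move=> k_lt; rewrite -mem_rtl_pos mem_nth. Qed.

Lemma sorted_ltr_pos : sorted ltn a.
Proof. exact: (sorted_filter ltn_trans _ (iota_ltn_sorted 1 (size v))). Qed.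

Lemma sorted_rtl_pos : sorted ltn b.
Proof. exact: (sorted_filter ltn_trans _ (iota_ltn_sorted 1 (size v))). Qed.

Lemma ltr_max_dominates j : 0 < j <= size v ->
  exists k, [/\ is_ltr_max v k, k <= j & letter v j <= letter v k].
Proof.
elim/ltn_ind: j => j IH j_range.
have [j_max | ] := boolP (is_ltr_max v j); first by exists j.
case/andP: (j_range) => j_gt0 j_le; rewrite /is_ltr_max j_gt0 j_le negb_forall.
case/existsP=> i; rewrite negb_imply -leqNgt => /andP[i_gt0 le_ji].
have lt_ij := ltn_ord i.
have [|k [k_max le_ki le_ik]] := IH i lt_ij; first lia.
by exists k; split=> //; [lia | exact: leq_trans le_ik].
Qed.

Lemma rtl_max_dominates j : 0 < j <= size v ->
  exists k, [/\ is_rtl_max v k, j <= k & letter v j <= letter v k].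
Proof.
have [n] := ubnP (size v - j); elim: n j => // n IH j lt_n j_range.
have [j_max | ] := boolP (is_rtl_max v j); first by exists j.
case/andP: (j_range) => j_gt0 j_le; rewrite /is_rtl_max j_gt0 j_le negb_forall.
case/existsP=> i; rewrite negb_imply -leqNgt => /andP[lt_ji le_ji].
have i_le := ltn_ord i.
have [||k [k_max le_ik le_ik']] := IH i; [lia | lia |].
by exists k; split=> //; [lia | exact: leq_trans le_ik'].
Qed.

Lemma letter_le_ltr_max k j : k < size a -> 0 < j <= size v ->
    (forall m, m \in a -> m <= j -> m <= nth 0 a k) ->
  letter v j <= letter v (nth 0 a k).
Proof.
move=> k_lt j_range below_ak.
have /is_ltr_maxP[_ lt_ak] : is_ltr_max v (nth 0 a k) by apply: is_ltr_max_nth.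
have [m [m_max le_mj le_jm]] := ltr_max_dominates j_range.
move/is_ltr_maxP: (m_max) => [/andP[m_gt0 _] _].
have := below_ak m; rewrite mem_ltr_pos => /(_ m_max le_mj).
rewrite leq_eqVlt => /orP[/eqP <- // | lt_m].
by apply: (leq_trans le_jm); apply/ltnW/lt_ak; rewrite m_gt0.
Qed.

Lemma letter_le_rtl_max k j : k < size b -> 0 < j <= size v ->
    (forall m, m \in b -> j <= m -> nth 0 b k <= m) ->
  letter v j <= letter v (nth 0 b k).
Proof.
move=> k_lt j_range above_bk.
have /is_rtl_maxP[_ lt_bk] : is_rtl_max v (nth 0 b k) by apply: is_rtl_max_nth.
have [m [m_max le_jm le_jm']] := rtl_max_dominates j_range.
move/is_rtl_maxP: (m_max) => [/andP[_ m_le] _].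
have := above_bk m; rewrite mem_rtl_pos => /(_ m_max le_jm).
rewrite leq_eqVlt => /orP[/eqP -> // | lt_m].
by apply: (leq_trans le_jm'); apply/ltnW/lt_bk; rewrite lt_m.
Qed.

Hypothesis v_uniq : uniq v.

Lemma letter_inj i j : 0 < i <= size v -> 0 < j <= size v ->
  letter v i = letter v j -> i = j.
Proof.
case: i j => [|i] [|j] // lt_i lt_j; rewrite /letter /= => /eqP.
by rewrite nth_uniq // => /eqP ->.
Qed.

Lemma letter_lt_of_le i j : 0 < i <= size v -> 0 < j <= size v -> i != j ->
  letter v i <= letter v j -> letter v i < letter v j.
Proof.
move=> i_range j_range ne_ij le_ij; rewrite ltn_neqAle le_ij andbT.
by apply: contra ne_ij => /eqP/letter_inj-> //.
Qed.

Lemma letter_lt_ltr_gap k j : k.+1 < size a -> nth 0 a k < j < nth 0 a k.+1 ->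
  letter v j < letter v (nth 0 a k).
Proof.
move=> k_lt /andP[gt_j lt_j].
have /is_ltr_maxP[ak_range _] : is_ltr_max v (nth 0 a k).
  exact/is_ltr_max_nth/ltnW.
have /is_ltr_maxP[ak1_range _] : is_ltr_max v (nth 0 a k.+1).
  by apply: is_ltr_max_nth.
have j_range : 0 < j <= size v by lia.
apply: letter_lt_of_le => //; first by rewrite neq_ltn gt_j orbT.
apply: letter_le_ltr_max => [|//|m m_in le_mj]; first lia.
rewrite (mem_leq_nth sorted_ltr_pos) //; last lia.
by rewrite leqNgt -(nth_leq_mem sorted_ltr_pos) // -ltnNge; lia.
Qed.

Lemma letter_lt_rtl_gap k j : k.+1 < size b -> nth 0 b k < j < nth 0 b k.+1 ->
  letter v j < letter v (nth 0 b k.+1).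
Proof.
move=> k_lt /andP[gt_j lt_j].
have /is_rtl_maxP[bk1_range _] : is_rtl_max v (nth 0 b k.+1).
  by apply: is_rtl_max_nth.
have j_range : 0 < j <= size v by lia.
apply: letter_lt_of_le => //; first by rewrite neq_ltn lt_j.
apply: letter_le_rtl_max => [//|//|m m_in le_jm].
rewrite (nth_leq_mem sorted_rtl_pos) // ltnNge -(mem_leq_nth sorted_rtl_pos) //; last lia.
by rewrite -ltnNge; lia.
Qed.

Lemma letter_lt_last_ltr_max j : 0 < j <= size v -> j != nth 0 a (size a).-1 ->
  letter v j < letter v (nth 0 a (size a).-1).
Proof.
move=> j_range ne_j.
have [m [m_max _ _]] := ltr_max_dominates j_range.
have a_gt0 : 0 < size a.
  by rewrite lt0n size_eq0; apply: contraTneq m_max => a_nil; rewrite -mem_ltr_pos a_nil.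
have /is_ltr_maxP[top_range _] : is_ltr_max v (nth 0 a (size a).-1).
  by apply: is_ltr_max_nth; rewrite prednK.
apply: letter_lt_of_le => //; apply: letter_le_ltr_max => [|//|m' m'_in _]; first lia.
rewrite (mem_leq_nth sorted_ltr_pos) //; last lia.
by rewrite -ltnS prednK // index_mem.
Qed.

Lemma head_rtl_pos : 0 < size a -> nth 0 b 0 = nth 0 a (size a).-1.
Proof.
set M := nth 0 a (size a).-1 => a_gt0.
have /is_ltr_maxP[M_range _] : is_ltr_max v M by apply: is_ltr_max_nth; rewrite prednK.
have M_in : M \in b.
  rewrite mem_rtl_pos; apply/is_rtl_maxP; split=> // j /andP[lt_Mj j_le].
  by apply: letter_lt_last_ltr_max; [lia | rewrite neq_ltn lt_Mj orbT].
have b_gt0 : 0 < size b by rewrite lt0n size_eq0; apply: contraTneq M_in => ->.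
apply/eqP; rewrite eqn_leq (nth_leq_mem sorted_rtl_pos) //= leqNgt.
apply/negP => lt_b0M.
have /is_rtl_maxP[b0_range lt_b0] : is_rtl_max v (nth 0 b 0) by apply: is_rtl_max_nth.
have M_lt_b0 : letter v M < letter v (nth 0 b 0).
  by apply: lt_b0; rewrite lt_b0M; case/andP: M_range.
have b0_lt_M : letter v (nth 0 b 0) < letter v M.
  by apply: letter_lt_last_ltr_max; rewrite // neq_ltn lt_b0M.
by rewrite ltnNge ltnW in M_lt_b0.
Qed.

End Maxima.

Section Patterns.
Variable v : seq nat.
Hypothesis v_uniq : uniq v.
Hypotheses (av_31425 : avoids v [:: 3; 1; 4; 2; 5]) (av_32415 : avoids v [:: 3; 2; 4; 1; 5])
  (av_31524 : avoids v [:: 3; 1; 5; 2; 4]) (av_32514 : avoids v [:: 3; 2; 5; 1; 4]).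

(* The four patterns are the words [3 p q p' q'] with [{p, p'} = {1, 2}] and [{q, q'} = {4, 5}]. *)
Lemma letter_lt_of_avoids i1 i2 i3 i4 i5 :
  0 < i1 < i2 -> i2 < i3 < i4 -> i4 < i5 <= size v ->
  letter v i2 < letter v i1 -> letter v i1 < letter v i3 -> letter v i1 < letter v i5 ->
  letter v i1 < letter v i4.
Proof.
move=> /andP[i1_gt0 lt12] /andP[lt23 lt34] /andP[lt45 i5_le] lt21 lt13 lt15.
have not_pattern P cs : avoids v P -> sorted ltn cs -> all (fun p => 0 < p <= size cs) P ->
    map (letter v) [:: i1; i2; i3; i4; i5] = [seq nth 0 cs p.-1 | p <- P] -> False.
  move=> av_P cs_sorted P_range e.
  apply: (avoids_positions (ps := [:: i1; i2; i3; i4; i5]) av_P); rewrite ?e /=; try lia.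
  exact: order_iso_relabel.
rewrite ltnNge; apply/negP => le41.
have lt41 : letter v i4 < letter v i1 by apply: letter_lt_of_le => //; lia.
case: (ltngtP (letter v i2) (letter v i4)) => [lt24 | lt42 | /letter_inj eq24];
  last by have := eq24 ltac:(lia) ltac:(lia); lia.
all: case: (ltngtP (letter v i3) (letter v i5)) => [lt35 | lt53 | /letter_inj eq35];
  try by have := eq35 ltac:(lia) ltac:(lia); lia.
- by apply: (not_pattern _
    [:: letter v i2; letter v i4; letter v i1; letter v i3; letter v i5] av_31425) => //=; lia.
- by apply: (not_pattern _
    [:: letter v i2; letter v i4; letter v i1; letter v i5; letter v i3] av_31524) => //=; lia.
- by apply: (not_pattern _
    [:: letter v i4; letter v i2; letter v i1; letter v i3; letter v i5] av_32415) => //=; lia.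
- by apply: (not_pattern _
    [:: letter v i4; letter v i2; letter v i1; letter v i5; letter v i3] av_32514) => //=; lia.
Qed.

End Patterns.

Lemma xdesc_cases v A : is_ltr_max v A -> xdesc v A = 0 \/
  [/\ 0 < xdesc v A, (xdesc v A).+1 < A,
      letter v (xdesc v A).+1 < letter v (xdesc v A) & letter v (xdesc v A) < letter v A].
Proof.
move=> /is_ltr_maxP[_ lt_A].
have [-> | [/andP[x_gt0 lt_xA] desc]] :
    xdesc v A = 0 \/ 0 < xdesc v A < A /\ letter v (xdesc v A).+1 < letter v (xdesc v A).
  rewrite /xdesc big_nat_cond.
  apply: (big_ind (fun y => y = 0 \/ 0 < y < A /\ letter v y.+1 < letter v y)) => [|y z|i].
  - by left.
  - by rewrite /maxn; case: ifP.
  - by case/andP=> /andP[i_ge1 lt_iA] desc; right; rewrite i_ge1 lt_iA.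
  by left.
have lt_xA' : letter v (xdesc v A) < letter v A by apply: lt_A; rewrite x_gt0.
right; split=> //; rewrite ltn_neqAle lt_xA andbT.
by apply: contraTneq desc => ->; rewrite -leqNgt ltnW.
Qed.

Theorem lemma3p10 (v : seq nat) :
  uniq v -> all (fun c => 0 < c) v ->
  avoids v [:: 3; 1; 4; 2; 5] -> avoids v [:: 3; 2; 4; 1; 5] ->
  avoids v [:: 3; 1; 5; 2; 4] -> avoids v [:: 3; 2; 5; 1; 4] ->
  let a := ltr_pos v in let h := size a in
  let b := rtl_pos v in let g := size b in
  1 < g -> h < pos a h -> 2 < h ->
  letter v (pos b 2) < letter v (pos a h.-1) ->
  let x := xdesc v (pos a h.-1) in
  (x = 0)
  \/ (x <> 0 /\ pos a h = (pos a h.-1).+1 /\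
      (letter v x < letter v (pos b 2) ->
       forall j, pos a h < j < pos b 2 ->
         letter v x < letter v j < letter v (pos b 2)))
  \/ (x <> 0 /\ (pos a h.-1).+1 < pos a h /\
      (forall j, pos a h.-1 < j < pos a h ->
         letter v x < letter v j < letter v (pos a h.-1)) /\
      (letter v x < letter v (pos b 2) ->
       forall j, pos a h < j < pos b 2 ->
         letter v x < letter v j < letter v (pos b 2))).
Proof.
move=> v_uniq _ av1 av2 av3 av4 a h b g g_gt1 _ h_gt2 _ x.
rewrite /x /pos; set A := nth 0 a h.-2; set M := nth 0 a h.-1; set B := nth 0 b 1.
have size_a : size (ltr_pos v) = h by [].
have h_pred : h.-2.+1 = h.-1 by lia.
have M_head : nth 0 b 0 = M by apply: head_rtl_pos => //; lia.
have A_max : is_ltr_max v A by apply: is_ltr_max_nth; lia.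
have /is_ltr_maxP[_ lt_M] : is_ltr_max v M by apply: is_ltr_max_nth; lia.
have /is_rtl_maxP[B_range _] : is_rtl_max v B by apply: is_rtl_max_nth.
have lt_AM : A < M by apply: ltn_nth_sorted; [exact: sorted_ltr_pos | lia | lia].
have lt_MB : M < B by rewrite -M_head; apply: ltn_nth_sorted; [exact: sorted_rtl_pos | |].
have gap_A j : A < j < M -> letter v j < letter v A.
  by have := @letter_lt_ltr_gap v v_uniq h.-2 j; rewrite h_pred; apply; lia.
have gap_B j : M < j < B -> letter v j < letter v B.
  by have := @letter_lt_rtl_gap v v_uniq 0 j; rewrite M_head; apply.
have [-> | [y_gt0 lt_y1A desc lt_yA]] := xdesc_cases A_max; first by left.
set y := xdesc v A in y_gt0 lt_y1A desc lt_yA *.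
have lt_yM : letter v y < letter v M by apply: lt_M; lia.
have y_lt_gap_A j : A < j < M -> letter v y < letter v j.
  move=> j_range.
  by apply: (letter_lt_of_avoids v_uniq av1 av2 av3 av4 (i2 := y.+1) (i3 := A) (i5 := M)); lia.
have y_lt_gap_B : letter v y < letter v B ->
    forall j, M < j < B -> letter v y < letter v j < letter v B.
  move=> lt_yB j j_range; rewrite gap_B // andbT.
  by apply: (letter_lt_of_avoids v_uniq av1 av2 av3 av4 (i2 := y.+1) (i3 := M) (i5 := B)); lia.
right; have [eq_M | lt_A1M] : M = A.+1 \/ A.+1 < M by lia.
- by left; split; [lia | split].
- right; split; [lia | split; [lia | split=> // j j_range]].
  by rewrite y_lt_gap_A ?gap_A.
Qed.
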